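(* Under the hypotheses of the preceding result (a subsystem $(B-A)X=0$ of $Eq(\mathfrak g,\mathcal E)$ with $p$ equations, $\sum_t(B_t-A_t)=(1,\dots,1)$, and a permutation $\pi$ with permutation matrix $P$ such that the first $p-1$ rows of $PB-P^+A$ are nonnegative), assume moreover that $\ell=|Con(\mathfrak g,\mathcal E)|=3$, that the row $A_{\pi(1)}$ contains exactly one entry equal to $1$, and that $G$ contains no free subgroup of rank two. Then $\tau(G)=5$.
   Context: Configurations: for $\mathfrak g=(g_1,\dots,g_n)$ and a partition $\mathcal E=\{E_1,\dots,E_m\}$ of a group $G$, a configuration is $C=(c_0,\dots,c_n)\in\{1,\dots,m\}^{n+1}$ such that some $x\in G$ has $x\in E_{c_0}$ and $g_ix\in E_{c_i}$; $Con(\mathfrak g,\mathcal E)$ is the set of configurations. $Eq(\mathfrak g,\mathcal E)$: variables $f_C$, equations $\sum_{C:\,c_j=i}f_C=\sum_{C:\,c_k=i}f_C$ ($1\le i\le m$, $0\le j,k\le n$), each written $aX=bX$ with $a,b\in\{0,1\}^\ell$ indicator vectors; a subsystem is a finite list (repetitions allowed, sides may be swapped) of such equations $A_tX=B_tX$. Row $i$ of $PM$ is row $\pi(i)$ of $M$; $P^+$ is $P$ with rows cyclically shifted up by one (rows $P_2,\dots,P_p,P_1$). Tarski number $\tau(G)$: minimum of $r+s$ over complete paradoxical decompositions, i.e. partitions $\{A_1,\dots,A_r,B_1,\dots,B_s\}$ of $G$ with $a_i,b_j\in G$ such that $\{a_iA_i\}$ and $\{b_jB_j\}$ each partition $G$.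 *)

From HB Require Import structures.
From mathcomp Require Import all_boot all_order all_algebra all_fingroup.
Set Implicit Arguments. Unset Strict Implicit. Unset Printing Implicit Defensive.
Import GRing.Theory Num.Theory.

Local Open Scope group_scope.

Section Defs.
Variable G : groupType.

Definition is_partition (m : nat) (E : 'I_m -> G -> Prop) : Prop :=
  forall x : G, exists! i : 'I_m, E i x.

(* C = (c_0,...,c_n) is a configuration for g = (g_1,...,g_n) (here indexed
   g 0 .. g (n-1)) and E : some x has x in E_(c_0) and g_i x in E_(c_i). *)
Definition is_config (n m : nat) (g : 'I_n -> G) (E : 'I_m -> G -> Prop)
    (C : {ffun 'I_n.+1 -> 'I_m}) : Prop :=
  exists x : G, E (C ord0) x /\ forall i : 'I_n, E (C (lift ord0 i)) (g i * x).

(* cs : 'I_l -> configurations is an enumeration (ordering) of Con(g,E);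
   in particular l = |Con(g,E)|.  Variable f_C is the coordinate cs^-1(C). *)
Definition enumerates_Con (n m l : nat) (g : 'I_n -> G) (E : 'I_m -> G -> Prop)
    (cs : 'I_l -> {ffun 'I_n.+1 -> 'I_m}) : Prop :=
  injective cs /\ (forall C, is_config g E C <-> exists k, cs k = C).

(* Indicator vector of the left-hand side sum_{C : c_j = i} f_C. *)
Definition eq_side (n m l : nat) (cs : 'I_l -> {ffun 'I_n.+1 -> 'I_m})
    (i : 'I_m) (j : 'I_n.+1) : 'I_l -> int :=
  fun k => Posz (nat_of_bool (cs k j == i)).

(* A subsystem of Eq(g,E) with p equations A_t X = B_t X : each row
   (A_t, B_t) is one of the equations of Eq(g,E) (sides possibly swapped,
   repetitions allowed). *)
Definition is_subsystem (n m l p : nat) (cs : 'I_l -> {ffun 'I_n.+1 -> 'I_m})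
    (A B : 'M[int]_(p, l)) : Prop :=
  forall t : 'I_p, exists (i : 'I_m) (j k : 'I_n.+1),
    (forall c, A t c = eq_side cs i j c) /\ (forall c, B t c = eq_side cs i k c).

(* P M for the permutation matrix P of pi : row t of P M is row pi(t) of M. *)
Definition permrows (p l : nat) (pi : {perm 'I_p}) (M : 'M[int]_(p, l)) :
    'M[int]_(p, l) := \matrix_(t, c) M (pi t) c.

(* P^+ M : rows of P M cyclically shifted up by one. *)
Definition permrows_plus (p l : nat) (pi : {perm 'I_p}) (M : 'M[int]_(p, l)) :
    'M[int]_(p, l) := \matrix_(t, c) M (pi (ordS t)) c.

Definition complete_paradoxical (r s : nat) : Prop :=
  exists (A : 'I_r -> G -> Prop) (B : 'I_s -> G -> Prop) (a : 'I_r -> G) (b : 'I_s -> G),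
    (forall x : G, exists! u : 'I_r + 'I_s,
        match u with inl i => A i x | inr j => B j x end) /\
    (forall y : G, exists! i : 'I_r, A i ((a i)^-1 * y)) /\
    (forall y : G, exists! j : 'I_s, B j ((b j)^-1 * y)).

Definition tarski_number_eq (N : nat) : Prop :=
  (exists r s, r + s = N /\ complete_paradoxical r s) /\
  (forall r s, complete_paradoxical r s -> (N <= r + s)%N).

(* Words in two letters: (false, e) is a^(+-1), (true, e) is b^(+-1);
   e = true means the inverse letter. *)
Definition letter (a b : G) (l : bool * bool) : G :=
  let x := if l.1 then b else a in if l.2 then x^-1 else x.

Definition eval_word (a b : G) (w : seq (bool * bool)) : G :=
  foldr (fun l acc => letter a b l * acc) 1 w.

Fixpoint reduced_word (w : seq (bool * bool)) : bool :=
  match w with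
  | l1 :: ((l2 :: _) as w') =>
      ~~ ((l1.1 == l2.1) && (l1.2 != l2.2)) && reduced_word w'
  | _ => true
  end.

Definition free_pair (a b : G) : Prop :=
  forall w, w != [::] -> reduced_word w -> eval_word a b w != 1.

Definition has_free_subgroup_rank2 : Prop := exists a b : G, free_pair a b.

End Defs.

(** Lower bound: in a complete paradoxical decomposition each side has at
    least two pieces, and with 2 + 2 pieces the elements a_0^-1 a_1 and
    b_0^-1 b_1 play ping-pong on the four pieces, so they generate a free
    group of rank two.

    Upper bound: color x by its configuration [kap x].  Equation t of the
    subsystem says that a translation h_t turns the color indicator B_t into
    A_t; follow x along the products Phi_t = h_t ... h_0.  By the chain
    condition, "A_(pi t) holds at the color of Phi_(t-1) x" is nonincreasing
    in t, and it starts true exactly when x has the color c0 singled out by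
    A_(pi 1).  So x has one exit stage if its color is c0 and none otherwise,
    while the column sums say that each color c is an exit color of
    1 + [c = c0] stages.  Sorting the points by their exit stage and exit
    color gives l + 2 = 5 pieces. *)

From mathcomp Require Import all_boot all_order all_algebra all_fingroup.
From mathcomp Require Import zify.
From Stdlib Require Import Classical IndefiniteDescription.
Set Implicit Arguments. Unset Strict Implicit. Unset Printing Implicit Defensive.
Import GRing.Theory Num.Theory.

Local Open Scope group_scope.

Lemma ord2P (j : 'I_2) : j = ord0 \/ j = ord_max.
Proof. by case: j => [[|[|//]] ?]; [left | right]; apply: val_inj. Qed.

Section LowerBound.
Variable G : groupType.

Lemma complete_paradoxical_sym r s :
  complete_paradoxical G r s -> complete_paradoxical G s r.
Proof.
move=> [A [B [a [b [part [tileA tileB]]]]]].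
exists B, A, b, a; split=> // x; have [u [Hu uniq_u]] := part x.
exists (match u with inl i => inr i | inr j => inl j end); split.
  by case: u Hu {uniq_u}.
by case=> [j|i] H; [rewrite (uniq_u (inr j) H) | rewrite (uniq_u (inl i) H)].
Qed.

Lemma complete_paradoxical_ge2 r s : complete_paradoxical G r s -> (2 <= r)%N.
Proof.
move=> [A [B [a [b [part [tileA tileB]]]]]].
case: r A a part tileA => [|[|r]] A a part tileA //.
  by have [[[] //]] := tileA 1.
have A0_full x : A ord0 x.
  have [i [Ai _]] := tileA (a ord0 * x).
  rewrite (_ : i = ord0) in Ai; last by apply/val_inj; case: i => [[]].
  by rewrite mulKg in Ai.
have [j [Bj _]] := tileB 1.
have [u [_ uniq_u]] := part ((b j)^-1 * 1).
by have := uniq_u (inl ord0) (A0_full _); rewrite (uniq_u (inr j) Bj).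
Qed.

Lemma two_tiling_cover (P : 'I_2 -> G -> Prop) (c : 'I_2 -> G) i j y :
  (forall y, exists! k, P k ((c k)^-1 * y)) -> j != i ->
  ~ P i ((c i)^-1 * y) -> P j ((c j)^-1 * y).
Proof.
move=> tile ji notPi; have [k [Pk _]] := tile y.
have ki : k != i by apply: contraPneq notPi => <-.
suff <- : k = j by [].
by apply/val_inj; move: ji ki; case: (ord2P i) (ord2P j) (ord2P k) => -> [] -> [] ->.
Qed.

Lemma two_tiling_nonempty (P Q : 'I_2 -> G -> Prop) (c d : 'I_2 -> G) :
  (forall y, exists! i, P i ((c i)^-1 * y)) ->
  (forall y, exists! j, Q j ((d j)^-1 * y)) ->
  (forall i j z, P i z -> Q j z -> False) -> forall i, exists z, P i z.
Proof.
move=> tileP tileQ disjPQ i; apply: NNPP => Pi_empty.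
pose i' : 'I_2 := if i == ord0 then ord_max else ord0.
have i'i : i' != i by rewrite /i'; case: (ord2P i) => ->.
have [j [Qj _]] := tileQ 1; set z := _ * 1 in Qj.
suff Pz : P i' z by exact: disjPQ Pz Qj.
rewrite -(mulKg (c i') z).
apply: (two_tiling_cover (i := i) tileP i'i) => Pi.
by apply: Pi_empty; eexists; exact: Pi.
Qed.

Section PingPong.
Variables (A B : 'I_2 -> G -> Prop) (a b : 'I_2 -> G).
Hypothesis part : forall x, exists! u : 'I_2 + 'I_2,
  match u with inl i => A i x | inr j => B j x end.
Hypothesis tileA : forall y, exists! i, A i ((a i)^-1 * y).
Hypothesis tileB : forall y, exists! j, B j ((b j)^-1 * y).

Let alpha := (a ord0)^-1 * a ord_max.
Let beta := (b ord0)^-1 * b ord_max.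

Definition ord_of_bool (e : bool) : 'I_2 := if e then ord_max else ord0.

Let piece (w : bool * bool) z := if w.1 then B (ord_of_bool w.2) z else A (ord_of_bool w.2) z.
Let inverse_letter (w : bool * bool) := (w.1, ~~ w.2).

Lemma ord_of_bool_inj : injective ord_of_bool. Proof. by case=> [] []. Qed.

Lemma piece_disjoint w w' z : piece w z -> piece w' z -> w = w'.
Proof.
have [u [_ uniq_u]] := part z; rewrite /piece; case: w w' => [[] e] [[] e'] /= Pz Pz'.
- by have := uniq_u (inr _) Pz'; rewrite (uniq_u (inr _) Pz) => -[/ord_of_bool_inj ->].
- by have := uniq_u (inl _) Pz'; rewrite (uniq_u (inr _) Pz).
- by have := uniq_u (inr _) Pz'; rewrite (uniq_u (inl _) Pz).
- by have := uniq_u (inl _) Pz'; rewrite (uniq_u (inl _) Pz) => -[/ord_of_bool_inj ->].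
Qed.

Lemma ping_pong_step w z :
  ~ piece (inverse_letter w) z -> piece w (letter alpha beta w * z).
Proof.
rewrite /piece /letter /alpha /beta; case: w => [[] []] /= notP;
  rewrite ?invMg ?invgK -mulgA.
- by apply: (two_tiling_cover (i := ord0) tileB); rewrite ?mulKg.
- by apply: (two_tiling_cover (i := ord_max) tileB); rewrite ?mulKg.
- by apply: (two_tiling_cover (i := ord0) tileA); rewrite ?mulKg.
- by apply: (two_tiling_cover (i := ord_max) tileA); rewrite ?mulKg.
Qed.

Lemma piece_nonempty w : exists z, piece w z.
Proof.
case: w => [[] e] /=.
  apply: (two_tiling_nonempty tileB tileA) => j i z Bz Az.
  by have := @piece_disjoint (true, j == ord_max) (false, i == ord_max) z;
    rewrite /piece /=; case: (ord2P i) (ord2P j) Az Bz => -> [] -> Az Bz;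
    move/(_ Bz Az).
apply: (two_tiling_nonempty tileA tileB) => i j z Az Bz.
by have := @piece_disjoint (false, i == ord_max) (true, j == ord_max) z;
  rewrite /piece /=; case: (ord2P i) (ord2P j) Az Bz => -> [] -> Az Bz;
  move/(_ Az Bz).
Qed.

Lemma reduced_word_into_piece w ws z : reduced_word (w :: ws) ->
  ~ piece (inverse_letter (last w ws)) z ->
  piece w (eval_word alpha beta (w :: ws) * z).
Proof.
elim: ws w z => [|w' ws IH] w z /=; first by move=> _; rewrite mulg1; apply: ping_pong_step.
move=> /andP [not_inverse red] notP; rewrite -mulgA; apply: ping_pong_step => Pz.
move: (piece_disjoint Pz (IH w' z red notP)) not_inverse.
by case: w w' {Pz IH red notP} => [g e] [g' e'] [-> <-]; rewrite eqxx; case: e.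
Qed.

Lemma ping_pong : free_pair alpha beta.
Proof.
move=> [//|w ws] _ red; apply/eqP => word1.
have [w0 [w0w w0ws]] : exists w0, w0 != w /\ w0 != inverse_letter (last w ws).
  case: w (last w ws) {red word1} => [[] []] [[] []];
  first [by exists (false, false) | by exists (false, true) | by exists (true, false)].
have [z Pz] := piece_nonempty w0.
have := reduced_word_into_piece (z := z) red; rewrite word1 mul1g => into_w.
have Pwz : piece w z by apply: into_w => /(piece_disjoint Pz)/eqP; rewrite (negbTE w0ws).
by move: (piece_disjoint Pz Pwz) => /eqP; rewrite (negbTE w0w).
Qed.

End PingPong.

Lemma complete_paradoxical22_free :
  complete_paradoxical G 2 2 -> has_free_subgroup_rank2 G.
Proof. by move=> [A [B [a [b [part [tileA tileB]]]]]]; eexists; eexists; exact: ping_pong. Qed.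

Lemma complete_paradoxical_ge5 r s : ~ has_free_subgroup_rank2 G ->
  complete_paradoxical G r s -> (5 <= r + s)%N.
Proof.
move=> no_free cp; have r2 := complete_paradoxical_ge2 cp.
have s2 := complete_paradoxical_ge2 (complete_paradoxical_sym cp).
rewrite leqNgt; apply/negP => small.
move: cp; have [-> ->] : r = 2 /\ s = 2 by lia.
by move/complete_paradoxical22_free.
Qed.

End LowerBound.

Lemma complete_paradoxical_of_colorings (G : groupType) r s
    (colA : G -> 'I_r) (colB : G -> 'I_s)
    (a : 'I_r -> G) (b : 'I_s -> G) :
  (forall x, exists! u : 'I_r + 'I_s,
     match u with inl i => colA (a i * x) = i | inr j => colB (b j * x) = j end) ->
  complete_paradoxical G r s.
Proof.
move=> part; exists (fun i x => colA (a i * x) = i), (fun j x => colB (b j * x) = j), a, b.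
split=> //; split=> y; [exists (colA y) | exists (colB y)];
  by split=> [|i]; rewrite mulKVg.
Qed.

Lemma card_set_sum (T : finType) (P : pred T) : #|[set t | P t]| = (\sum_t P t)%N.
Proof. by rewrite -sum1_card big_mkcond; apply: eq_bigr => t _; rewrite inE; case: (P t). Qed.

Section Stages.
Variables (G : groupType) (k q : nat) (kap : G -> 'I_k) (c0 : 'I_k).
Variables (Phi : 'I_q -> G) (exit : 'I_q -> 'I_k -> bool).
Hypothesis card_exit : forall c, #|[set t | exit t c]| = (1 + (c == c0))%N.
Hypothesis card_exits : forall x, #|[set t | exit t (kap (Phi t * x))]| = (kap x == c0).

Section SplitStage.
Variable t2 : 'I_q.
Hypothesis exit_t2 : exit t2 c0.

Definition spare c := [set t | (t != t2) && exit t c].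
Definition exits x := [set t | exit t (kap (Phi t * x))].

Lemma card_spare c : #|spare c| = ((c == c0) || ~~ exit t2 c).
Proof.
have := card_exit c; rewrite (cardsD1 t2) inE.
have -> : [set t | exit t c] :\ t2 = spare c by apply/setP => t; rewrite !inE.
case: (eqVneq c c0) => [->|nc0]; rewrite ?exit_t2 ?eqxx ?(negbTE nc0) /=; first lia.
by case: (exit t2 c) => /=; lia.
Qed.

Lemma spare_uniq c t t' : t \in spare c -> t' \in spare c -> t = t'.
Proof.
have /card_le1_eqP le1 : (#|spare c| <= 1)%N by rewrite card_spare; case: (_ || _).
by move=> tc t'c; apply: le1.
Qed.

Lemma spare_c0 : exists t, t \in spare c0.
Proof. by apply/card_gt0P; rewrite card_spare eqxx. Qed.

Lemma spare_eq0 c : c != c0 -> (spare c == set0) = exit t2 c.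
Proof. by move/negbTE => nc0; rewrite -cards_eq0 card_spare nc0; case: (exit t2 c). Qed.

Lemma in_exits x t : (t \in exits x) = exit t (kap (Phi t * x)).
Proof. by rewrite inE. Qed.

Lemma exits_uniq x t t' : t \in exits x -> t' \in exits x -> t = t'.
Proof.
have /card_le1_eqP le1 : (#|exits x| <= 1)%N by rewrite card_exits; case: (_ == _).
by move=> tx t'x; apply: le1.
Qed.

Lemma exits_eq0 x : (exits x == set0) = (kap x != c0).
Proof. by rewrite -cards_eq0 card_exits; case: (kap x == c0). Qed.

Definition spare_exit c : option 'I_q := [pick t in spare c].

Lemma spare_exitE c t : (spare_exit c == Some t) = (t \in spare c).
Proof.
rewrite /spare_exit; case: pickP => [t' t'c | spare0]; last by rewrite spare0.
by apply/eqP/idP => [[<-] // | tc]; rewrite (spare_uniq t'c tc).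
Qed.

Lemma spare_exit_exits x t : t \in exits x -> t != t2 -> spare_exit (kap (Phi t * x)) = Some t.
Proof. by rewrite inE => tx tt2; apply/eqP; rewrite spare_exitE inE tt2. Qed.

Lemma spare_exit_color x c t : spare_exit c = Some t -> kap (Phi t * x) = c ->
  t \in exits x /\ t != t2.
Proof. by move/eqP; rewrite spare_exitE !inE => /andP [-> dtc] ->. Qed.

Lemma spare_exit_c0 : spare_exit c0 != None.
Proof.
by have [t tc0] := spare_c0; apply/negP => /eqP E; move: tc0; rewrite -spare_exitE E.
Qed.

Lemma spare_exit_none c : c != c0 -> (spare_exit c == None) = exit t2 c.
Proof.
move=> nc0; rewrite -spare_eq0 //; rewrite /spare_exit; case: pickP => [t tc | spare0].
  by apply/esym/negP => /eqP r0; rewrite r0 inE in tc.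
by apply/esym/eqP/setP => t; rewrite spare0 inE.
Qed.

(* The pieces: for a color c with a spare exit stage t, the points exiting
   at t with color c (translated by Phi t); for the remaining colors, whose
   only exit stage is t2, the points of that color; the points exiting at t2
   (translated by Phi t2); the points whose color is not an exit color of t2. *)
Definition shiftA c : G := if spare_exit c is Some t then Phi t else 1.
Definition colorB y : 'I_2 := if exit t2 (kap y) then ord0 else ord_max.
Definition shiftB (j : 'I_2) : G := if j == ord0 then Phi t2 else 1.

Definition piece x : 'I_k + 'I_2 :=
  if [pick t in exits x] is Some t then
    if t == t2 then inr ord0 else inl (kap (Phi t * x))
  else if exit t2 (kap x) then inl (kap x) else inr ord_max.

Lemma in_pieceA x c : (kap (shiftA c * x) == c) = (piece x == inl c).
Proof.
rewrite /shiftA /piece; case: pickP => [t tx | noexit]; case oc: (spare_exit c) => [t'|].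
- apply/eqP/eqP => [e | ].
    have [t'x t't2] := spare_exit_color oc e.
    by rewrite -(exits_uniq t'x tx) (negbTE t't2) e.
  by case: eqP => // /eqP tt2 [e]; move: oc; rewrite -e (spare_exit_exits tx tt2) => -[->].
- have kx : kap x = c0 by apply/eqP; rewrite -[_ == _]negbK -exits_eq0; apply/set0Pn; exists t.
  rewrite mul1g kx; case: eqP => [c0c | _]; first by move/eqP: spare_exit_c0; rewrite c0c oc.
  case: ifP => // /negbT tt2; apply/esym/eqP => -[e].
  by move: oc; rewrite -e (spare_exit_exits tx tt2).
- have nx : exits x == set0 by apply/eqP/setP => t; rewrite noexit inE.
  rewrite exits_eq0 in nx; apply/eqP/eqP => [e | ].
    by have [] := spare_exit_color oc e; rewrite noexit.
  by case: ifP => // dx [e]; move: (spare_exit_none nx); rewrite dx e oc.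
- have nx : exits x == set0 by apply/eqP/setP => t; rewrite noexit inE.
  rewrite exits_eq0 in nx; rewrite mul1g; apply/eqP/eqP => [e | ].
    by move: (spare_exit_none nx); rewrite e oc => /esym ->.
  by case: ifP => // _ [].
Qed.

Lemma colorB_eq0 y : (colorB y == ord0) = exit t2 (kap y).
Proof. by rewrite /colorB; case: ifP. Qed.

Lemma colorB_eq1 y : (colorB y == ord_max) = ~~ exit t2 (kap y).
Proof. by rewrite /colorB; case: ifP. Qed.

Lemma in_pieceB x j : (colorB (shiftB j * x) == j) = (piece x == inr j).
Proof.
rewrite /shiftB /piece; case: (ord2P j) => -> /=;
  rewrite ?colorB_eq0 ?colorB_eq1 ?mul1g -?in_exits; case: pickP => [t tx | noexit].
- apply/idP/eqP => [t2x | ]; first by rewrite -(exits_uniq t2x tx) eqxx.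
  by case: ifP => // /eqP <-.
- by rewrite noexit; case: ifP.
- have kx : kap x = c0 by apply/eqP; rewrite -[_ == _]negbK -exits_eq0; apply/set0Pn; exists t.
  by rewrite kx exit_t2; case: ifP.
- by case: ifP.
Qed.

Lemma complete_paradoxical_of_exit : complete_paradoxical G k 2.
Proof.
apply: (@complete_paradoxical_of_colorings _ _ _ kap colorB shiftA shiftB) => x.
exists (piece x); split.
  by case E: (piece x) => [c|j]; apply/eqP; rewrite ?in_pieceA ?in_pieceB E.
by case=> [c|j] /eqP; rewrite ?in_pieceA ?in_pieceB => /eqP.
Qed.

End SplitStage.

Lemma complete_paradoxical_of_stages : complete_paradoxical G k 2.
Proof.
have /card_gt0P [t2] : (0 < #|[set t | exit t c0]|)%N by rewrite card_exit.
by rewrite inE => /complete_paradoxical_of_exit.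
Qed.

End Stages.
Lemma card_descents q (u v : nat -> bool) :
    (forall t, t < q -> v t.+1 -> u t)%N -> v q = false ->
  (#|[set t : 'I_q | u t && ~~ v t.+1]| + \sum_(t < q) v t = \sum_(t < q) u t + v 0)%N.
Proof.
move=> vu vq; rewrite card_set_sum.
have -> : (\sum_(t < q) v t = \sum_(t < q) v t.+1 + v 0)%N.
  transitivity (\sum_(t < q.+1) v t)%N; first by rewrite big_ord_recr /= vq addn0.
  by rewrite big_ord_recl addnC.
rewrite addnA -big_split /=; congr (_ + _)%N; apply: eq_bigr => t _.
by case: (u t) (v t.+1) (vu t (ltn_ord t)) => [] [] // /(_ isT).
Qed.

Section Chain.
Variables (G : groupType) (K : Type) (kap : G -> K) (q : nat).
Variables (a b : nat -> K -> bool) (h : nat -> G).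
Hypothesis row_shift : forall t y, (t < q)%N -> b t (kap (h t * y)) = a t (kap y).
Hypothesis row_chain : forall t c, (t < q)%N -> a t.+1 c -> b t c.
Hypothesis row_last : forall c, a q c = false.

Fixpoint prefix t : G := if t is t'.+1 then h t' * prefix t' else 1.

Definition alive t x := a t (kap (prefix t * x)).

Lemma alive_succ t x : (t < q)%N -> alive t.+1 x -> alive t x.
Proof. by move=> tq; rewrite /alive /= -mulgA -(row_shift _ tq); exact: row_chain. Qed.

Lemma exit_alive t x : (t < q)%N ->
  b t (kap (prefix t.+1 * x)) && ~~ a t.+1 (kap (prefix t.+1 * x)) =
  alive t x && ~~ alive t.+1 x.
Proof. by move=> tq; rewrite /alive /= -mulgA row_shift. Qed.

Lemma card_exit_stages x :
  #|[set t : 'I_q | b t (kap (prefix t.+1 * x)) && ~~ a t.+1 (kap (prefix t.+1 * x))]|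
  = a 0 (kap x).
Proof.
have := card_descents (u := alive^~ x) (v := alive^~ x) (@alive_succ^~ x) (row_last _).
rewrite addnC /alive mul1g => /addnI <-.
by apply: eq_card => t; rewrite !inE exit_alive.
Qed.

End Chain.

Lemma complete_paradoxical_of_rows (G : groupType) (k q : nat) (kap : G -> 'I_k)
    (a b : nat -> 'I_k -> bool) (h : nat -> G) (c0 : 'I_k) :
  (forall t y, (t < q)%N -> b t (kap (h t * y)) = a t (kap y)) ->
  (forall t c, (t < q)%N -> a t.+1 c -> b t c) ->
  (forall c, a q c = false) ->
  (forall c, a 0 c = (c == c0)) ->
  (forall c, \sum_(t < q) b t c = 1 + \sum_(t < q) a t c)%N ->
  complete_paradoxical G k 2.
Proof.
move=> row_shift row_chain row_last row_first row_sum.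
apply: (@complete_paradoxical_of_stages _ _ _ kap c0 (fun t : 'I_q => prefix h t.+1)
          (fun t c => b t c && ~~ a t.+1 c)) => [c | x].
  have /= := card_descents (u := b^~ c) (v := a^~ c) (row_chain^~ c) (row_last c).
  by rewrite row_sum row_first addnAC => /addIn.
rewrite -row_first; exact: (card_exit_stages row_shift row_chain row_last).
Qed.
Lemma sum_Posz (I : finType) (F : I -> nat) : (\sum_i Posz (F i))%R = Posz (\sum_i F i).
Proof. by rewrite -natz natr_sum; apply: eq_bigr => i _; rewrite natz. Qed.

Section RowIndicators.
Local Open Scope ring_scope.
Variables (l p : nat) (A B : 'M[int]_(p.+1, l)) (pi : {perm 'I_p.+1}).
Hypothesis A01 : forall r c, A r c = Posz (A r c == 1).
Hypothesis B01 : forall r c, B r c = Posz (B r c == 1).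

(* Row [t] of [P M], extended by zero rows beyond [p]. *)
Definition row_ind (M : 'M[int]_(p.+1, l)) t c := (t < p.+1)%N && (M (pi (inord t)) c == 1).

Lemma sum_row_ind (M : 'M[int]_(p.+1, l)) c : (forall r, M r c = Posz (M r c == 1)) ->
  \sum_(t < p.+1) M t c = Posz (\sum_(t < p.+1) row_ind M t c).
Proof.
move=> M01; rewrite (reindex_inj (@perm_inj _ pi)) -sum_Posz; apply: eq_bigr => t _.
by rewrite /row_ind ltn_ord inord_val -M01.
Qed.

Lemma row_ind_sum c : \sum_(t < p.+1) (B t c - A t c) = 1 ->
  (\sum_(t < p.+1) row_ind B t c = 1 + \sum_(t < p.+1) row_ind A t c)%N.
Proof. by rewrite sumrB (sum_row_ind (B01^~ c)) (sum_row_ind (A01^~ c)); lia. Qed.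

Lemma row_ind_chain :
  (forall (t : 'I_p.+1) c, (t.+1 < p.+1)%N -> 0 <= (permrows pi B - permrows_plus pi A) t c) ->
  forall t c, (t < p.+1)%N -> row_ind A t.+1 c -> row_ind B t c.
Proof.
move=> chainBA t c tp /andP [tp1 /eqP At1]; rewrite /row_ind tp.
have := chainBA (inord t) c; rewrite inordK // => /(_ tp1); rewrite !mxE.
have -> : ordS (inord t) = inord t.+1 :> 'I_p.+1.
  by apply/val_inj; rewrite /= !inordK ?modn_small.
by rewrite At1 B01; case: (_ == 1).
Qed.

End RowIndicators.

Section Configurations.
Variables (G : groupType) (n m l : nat) (g : 'I_n -> G) (E : 'I_m -> G -> Prop).
Variable cs : 'I_l -> {ffun 'I_n.+1 -> 'I_m}.

(* [g_0 = 1], so that entry [j] of a configuration of [x] is the piece of [g_j x]. *)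
Definition translate (j : 'I_n.+1) : G := if unlift ord0 j is Some i then g i else 1.

Lemma exists_configuration_map : is_partition E -> enumerates_Con g E cs ->
  exists kap : G -> 'I_l, forall x j, E (cs (kap x) j) (translate j * x).
Proof.
move=> partE [_ enumC].
apply: (functional_choice (fun x k => forall j, E (cs k j) (translate j * x))) => x.
have [f Ef] : exists f : 'I_n.+1 -> 'I_m, forall j, E (f j) (translate j * x).
  apply: (functional_choice (fun j i => E i (translate j * x))) => j.
  by have [i [Ei _]] := partE (translate j * x); exists i.
have [|k csk] := (enumC (finfun f)).1.
  exists x; split.
    by rewrite ffunE; have := Ef ord0; rewrite /translate unlift_none mul1g.
  by move=> i; rewrite ffunE; have := Ef (lift ord0 i); rewrite /translate liftK.
by exists k => j; rewrite csk ffunE.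
Qed.

Lemma subsystem_entry01 p (A B : 'M[int]_(p, l)) : is_subsystem cs A B ->
  forall r c, A r c = Posz (A r c == 1%R) /\ B r c = Posz (B r c == 1%R).
Proof.
move=> sub r c; have [i [j [k [Ar Br]]]] := sub r.
by rewrite Ar Br /eq_side; split; case: (_ == i).
Qed.

Variable kap : G -> 'I_l.
Hypothesis partE : is_partition E.
Hypothesis kapE : forall x j, E (cs (kap x) j) (translate j * x).

Lemma configuration_entryP y j i : reflect (E i (translate j * y)) (cs (kap y) j == i).
Proof.
apply: (iffP eqP) => [<- // | Ei].
have [i' [_ uniq_i']] := partE (translate j * y).
by rewrite -(uniq_i' _ Ei) (uniq_i' _ (kapE y j)).
Qed.

Lemma eq_side_translate i j k y :
  eq_side cs i k (kap ((translate k)^-1 * translate j * y)) = eq_side cs i j (kap y).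
Proof.
rewrite /eq_side; congr (Posz (nat_of_bool _)).
by apply/configuration_entryP/configuration_entryP; rewrite !mulgA mulgV mul1g.
Qed.

Lemma subsystem_translations p (A B : 'M[int]_(p, l)) : is_subsystem cs A B ->
  exists h : 'I_p -> G, forall r y, B r (kap (h r * y)) = A r (kap y).
Proof.
move=> sub.
apply: (functional_choice (fun r h => forall y, B r (kap (h * y)) = A r (kap y))) => r.
have [i [j [k [Ar Br]]]] := sub r.
by exists ((translate k)^-1 * translate j) => y; rewrite Ar Br eq_side_translate.
Qed.

Lemma complete_paradoxical_of_subsystem p (A B : 'M[int]_(p, l)) (pi : {perm 'I_p}) :
  is_subsystem cs A B ->
  (forall c, \sum_(t < p) (B t c - A t c) = 1)%R ->
  (forall (t : 'I_p) c, (t.+1 < p)%N -> 0 <= (permrows pi B - permrows_plus pi A) t c)%R ->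
  (forall t0 : 'I_p, val t0 = 0%N -> #|[set c | A (pi t0) c == 1%R]| = 1%N) ->
  complete_paradoxical G l 2.
Proof.
case: p A B pi => [|p] A B pi sub sumBA chainBA first1.
  by have := sumBA (kap 1); rewrite big_ord0.
have [h hB] := subsystem_translations sub.
have [c0 first_c0] : exists c0, [set c | A (pi ord0) c == 1%R] = [set c0].
  by apply/cards1P; rewrite first1.
have A01 r c := (subsystem_entry01 sub r c).1.
have B01 r c := (subsystem_entry01 sub r c).2.
apply: (@complete_paradoxical_of_rows _ _ p.+1 kap (row_ind pi A) (row_ind pi B)
          (fun t => h (pi (inord t))) c0).
- by move=> t y tp; rewrite /row_ind tp hB.
- exact: row_ind_chain.
- by move=> c; rewrite /row_ind ltnn.
- move=> c; rewrite /row_ind /= (_ : inord 0 = ord0); last by apply/val_inj; rewrite /= inordK.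
  by move/setP/(_ c): first_c0; rewrite !inE.
- by move=> c; apply: row_ind_sum.
Qed.

End Configurations.


Local Close Scope group_scope.
Local Open Scope ring_scope.
Unset Implicit Arguments.

Theorem mainTheorem6 (G : groupType) (n m l p : nat)
    (g : 'I_n -> G) (E : 'I_m -> G -> Prop)
    (cs : 'I_l -> {ffun 'I_n.+1 -> 'I_m})
    (A B : 'M[int]_(p, l)) (pi : {perm 'I_p}) :
  is_partition E ->
  enumerates_Con g E cs ->
  is_subsystem cs A B ->
  (forall c : 'I_l, \sum_(t < p) (B t c - A t c) = 1) ->
  (forall (t : 'I_p) (c : 'I_l), (t.+1 < p)%N ->
      0 <= (permrows pi B - permrows_plus pi A) t c) ->
  l = 3%N ->
  (forall t0 : 'I_p, val t0 = 0%N -> #|[set c : 'I_l | A (pi t0) c == 1]| = 1%N) ->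
  ~ has_free_subgroup_rank2 G ->
  tarski_number_eq G 5.
Proof.
move=> partE enumC sub sumBA chainBA l3 first1 no_free; subst l.
split; last by move=> r s; apply: complete_paradoxical_ge5.
exists 3%N, 2%N; split=> //.
have [kap kapE] := exists_configuration_map partE enumC.
exact: (complete_paradoxical_of_subsystem partE kapE sub sumBA chainBA first1).
Qed.
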